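(* Let $n\ge2$ and let $T=(n;\sigma,\delta,-\sigma)$ with $\sigma,\delta\in\mathbb{R}$, $\sigma\ne0$ (a real shifted skew-symmetric tridiagonal Toeplitz matrix). Then every eigenvalue $\lambda_h$ of $T$ has $\mathcal A_{\mathcal T}$-structured condition number $\kappa_{\mathcal A_{\mathcal T}}(\lambda_h)=\frac1{\sqrt n}$, $h=1,\dots,n$.
   Context: $(n;\sigma,\delta,\tau)$ is the $n\times n$ tridiagonal Toeplitz matrix with diagonal $\delta$, superdiagonal $\tau$, subdiagonal $\sigma$. For $\sigma\tau\ne0$ the eigenvalue $\lambda_h=\delta+2\sqrt{\sigma\tau}\cos\frac{h\pi}{n+1}$ has right eigenvector $x_h$ with $x_{h,k}=(\sqrt{\sigma/\tau})^k\sin\frac{hk\pi}{n+1}$ and left eigenvector $y_h$ ($y_h^HT=\lambda_hy_h^H$) with $y_{h,k}=(\sqrt{\bar\tau/\bar\sigma})^k\sin\frac{hk\pi}{n+1}$; let $\widetilde x_h,\widetilde y_h$ be their normalizations, $\kappa(\lambda_h)=\|x_h\|_2\|y_h\|_2/|y_h^Hx_h|$ (here equal to $1$), and $W_h=\widetilde y_h\widetilde x_h^H$. $\mathcal A_{\mathcal T}$ denotes the real subspace of real matrices $(n;s,d,-s)$, $s,d\in\mathbb{R}$; $W_h|_{\mathcal A_{\mathcal T}}$ is the orthogonal projection of $W_h$ onto $\mathcal A_{\mathcal T}$ with respect to the real Frobenius inner product $\mathrm{Re}\,\mathrm{tr}(A^HB)$, and $\kappa_{\mathcal A_{\mathcal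 T}}(\lambda_h)=\kappa(\lambda_h)\|W_h|_{\mathcal A_{\mathcal T}}\|_F$. *)

From HB Require Import structures.
From mathcomp Require Import all_boot all_order all_algebra.
From mathcomp Require Import complex.
From mathcomp Require Import reals trigo.
Set Implicit Arguments. Unset Strict Implicit. Unset Printing Implicit Defensive.
Import Order.TTheory GRing.Theory Num.Theory.
Local Open Scope ring_scope.
Local Open Scope complex_scope.

Section TridiagToeplitz.
Variable R : realType.
Local Notation C := R[i].

Definition tridiag (n : nat) (s d t : C) : 'M[C]_n :=
  \matrix_(i < n, j < n)
    if i == j.+1 :> nat then s
    else if i == j :> nat then d
    else if j == i.+1 :> nat then t
    else 0.

Definition adjmx m n (A : 'M[C]_(m, n)) : 'M[C]_(n, m) := (map_mx (@conjc R) A)^T.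

Definition vnorm n (v : 'cV[C]_n) : R :=
  Num.sqrt (\sum_(k < n) complex.Re ((v k 0)^* * v k 0)).

Definition hdot n (u v : 'cV[C]_n) : C := \sum_(k < n) (u k 0)^* * v k 0.

Definition rip n (A B : 'M[C]_n) : R := complex.Re (\tr (adjmx A *m B)).
Definition frob n (A : 'M[C]_n) : R := Num.sqrt (rip A A).

Definition reigvec (n : nat) (sigma tau : C) (h : nat) : 'cV[C]_n :=
  \col_(k < n) ((sqrtc (sigma / tau)) ^+ k.+1 *
                (sin (h%:R * k.+1%:R * pi / n.+1%:R))%:C).

Definition leigvec (n : nat) (sigma tau : C) (h : nat) : 'cV[C]_n :=
  \col_(k < n) ((sqrtc (tau^* / sigma^*)) ^+ k.+1 *
                (sin (h%:R * k.+1%:R * pi / n.+1%:R))%:C).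

Definition normalize n (v : 'cV[C]_n) : 'cV[C]_n := ((vnorm v)^-1)%:C *: v.

Definition kappa n (x y : 'cV[C]_n) : R :=
  vnorm x * vnorm y / Normc.normc (hdot y x).

Definition Wmx n (x y : 'cV[C]_n) : 'M[C]_n := normalize y *m adjmx (normalize x).

Definition in_AT n (M : 'M[C]_n) : Prop :=
  exists s d : R, M = tridiag n s%:C d%:C (- s%:C).

Definition is_proj_AT n (W P : 'M[C]_n) : Prop :=
  in_AT P /\ forall A, in_AT A -> rip A (W - P) = 0.

End TridiagToeplitz.

(* Since tau = -sigma, both sqrt(sigma/tau) and sqrt(conj tau / conj sigma) equal i, so the
   left and right eigenvectors coincide: kappa(lambda_h) = 1 and W_h = x x^H is Hermitian with
   unit trace.  A_T is spanned over R by the real skew-symmetric matrix (n; 1, 0, -1) and the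
   identity; the former is orthogonal to every Hermitian matrix, in particular to W_h and to the
   identity, so the projection of W_h onto A_T is (Re tr W_h / n) I = I / n, whose Frobenius
   norm is 1 / sqrt n. *)

From HB Require Import structures.
From mathcomp Require Import all_boot all_order all_algebra.
From mathcomp Require Import complex.
From mathcomp Require Import reals trigo.
From mathcomp Require Import zify ring.
Set Implicit Arguments. Unset Strict Implicit. Unset Printing Implicit Defensive.
Import Order.TTheory GRing.Theory Num.Theory.
Local Open Scope ring_scope.
Local Open Scope complex_scope.

Section SkewToeplitzCondition.
Variable R : realType.
Local Notation C := R[i].

Lemma mulJcE (z : C) : z^* * z = (complex.Re z ^+ 2 + complex.Im z ^+ 2)%:C.
Proof.
by case: z => a b; apply/eqP; rewrite eq_complex /= !expr2; apply/andP; split; apply/eqP; ring.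
Qed.

Lemma Re_mulJc_ge0 (z : C) : 0 <= complex.Re (z^* * z).
Proof. by rewrite mulJcE addr_ge0 ?sqr_ge0. Qed.

Lemma Re_mulJc_gt0 (z : C) : z != 0 -> 0 < complex.Re (z^* * z).
Proof.
rewrite mulJcE /= lt0r addr_ge0 ?sqr_ge0 // andbT.
by case: z => a b; rewrite eq_complex /= paddr_eq0 ?sqr_ge0 // !sqrf_eq0.
Qed.

Lemma normc_real (r : R) : Normc.normc r%:C = `|r|.
Proof. by rewrite /= expr0n /= addr0 sqrtr_sqr. Qed.

Lemma Re_conj (z : C) : complex.Re z^* = complex.Re z.
Proof. by case: z. Qed.

(* [leigvec] conjugates through [Num.conj], which [conjc_real] does not match syntactically. *)
Lemma conj_realc (r : R) : Num.conj (r%:C : C) = r%:C.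
Proof. exact: conjc_real. Qed.

Lemma Re_realM (c : R) (z : C) : complex.Re (c%:C * z) = c * complex.Re z.
Proof. by case: z => a b /=; rewrite mul0r subr0. Qed.

Lemma Re_nat k : complex.Re (k%:R : C) = k%:R.
Proof. by rewrite raddfMn. Qed.

Lemma adjmxE m p (A : 'M[C]_(m, p)) i j : adjmx A i j = (A j i)^*.
Proof. by rewrite !mxE. Qed.

Lemma adjmxK m p (A : 'M[C]_(m, p)) : adjmx (adjmx A) = A.
Proof. by apply/matrixP => i j; rewrite !adjmxE conjcK. Qed.

Lemma adjmxM m p q (A : 'M[C]_(m, p)) (B : 'M[C]_(p, q)) :
  adjmx (A *m B) = adjmx B *m adjmx A.
Proof. by rewrite /adjmx map_mxM trmx_mul. Qed.

Lemma adjmx1 n : adjmx (1%:M : 'M[C]_n) = 1%:M.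
Proof. by apply/matrixP => i j; rewrite !mxE eq_sym conjc_nat. Qed.

Lemma mxtrace_adj n (A : 'M[C]_n) : \tr (adjmx A) = (\tr A)^*.
Proof. by rewrite mxtrace_tr trace_map_mx. Qed.

Lemma mxtrace_mul_adj n (u v : 'cV[C]_n) : \tr (u *m adjmx v) = hdot v u.
Proof. by apply: eq_bigr => k _; rewrite !mxE big_ord1 adjmxE mulrC. Qed.

Lemma vnorm_sqr n (x : 'cV[C]_n) :
  vnorm x ^+ 2 = \sum_k complex.Re ((x k 0)^* * x k 0).
Proof. by rewrite sqr_sqrtr // sumr_ge0 // => k _; apply: Re_mulJc_ge0. Qed.

Lemma hdot_self n (x : 'cV[C]_n) : hdot x x = (vnorm x ^+ 2)%:C.
Proof. by rewrite vnorm_sqr rmorph_sum; apply: eq_bigr => k _; rewrite mulJcE. Qed.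

Lemma vnorm_gt0 n (x : 'cV[C]_n) : x != 0 -> 0 < vnorm x.
Proof.
case/matrix0Pn => k [j]; rewrite (ord1 j) => xk_neq0.
rewrite sqrtr_gt0 (bigD1 k) //= ltr_pwDl ?Re_mulJc_gt0 //.
by rewrite sumr_ge0 // => l _; apply: Re_mulJc_ge0.
Qed.

Lemma vnormZ n (c : R) (x : 'cV[C]_n) : vnorm (c%:C *: x) = `|c| * vnorm x.
Proof.
rewrite /vnorm -sqrtr_sqr -sqrtrM ?sqr_ge0 // mulr_sumr; congr Num.sqrt.
by apply: eq_bigr => k _; rewrite mxE; case: (x k 0) => a b /=; ring.
Qed.

Lemma vnorm_normalize n (x : 'cV[C]_n) : x != 0 -> vnorm (normalize x) = 1.
Proof.
move=> /vnorm_gt0 x_gt0.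
by rewrite vnormZ gtr0_norm ?invr_gt0 // mulVf ?gt_eqF.
Qed.

Lemma rip_sym n (A B : 'M[C]_n) : rip A B = rip B A.
Proof. by rewrite /rip -Re_conj -mxtrace_adj adjmxM adjmxK. Qed.

Lemma ripDr n (A B1 B2 : 'M[C]_n) : rip A (B1 + B2) = rip A B1 + rip A B2.
Proof. by rewrite /rip mulmxDr mxtraceD raddfD. Qed.

Lemma ripNr n (A B : 'M[C]_n) : rip A (- B) = - rip A B.
Proof. by rewrite /rip mulmxN !raddfN. Qed.

Lemma ripZr n (c : R) (A B : 'M[C]_n) : rip A (c%:C *: B) = c * rip A B.
Proof. by rewrite /rip -scalemxAr mxtraceZ Re_realM. Qed.

Lemma rip1l n (B : 'M[C]_n) : rip 1%:M B = complex.Re (\tr B).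
Proof. by rewrite /rip adjmx1 mul1mx. Qed.

(* By symmetry [rip K B = Re (\tr (B *m K))], by skewness [rip K B = - Re (\tr (K *m B))]. *)
Lemma rip_skew_herm n (K B : 'M[C]_n) :
  adjmx K = - K -> adjmx B = B -> rip K B = 0.
Proof.
move=> skewK hermB; apply/eqP; rewrite -[_ == 0](@mulrn_eq0 _ _ 2) mulr2n.
rewrite {1}rip_sym /rip hermB skewK mulNmx !raddfN.
by rewrite mxtrace_mulC subrr.
Qed.

Lemma rip_self n (A : 'M[C]_n) : rip A A = \sum_j vnorm (col j A) ^+ 2.
Proof.
rewrite /rip /mxtrace raddf_sum; apply: eq_bigr => j _.
rewrite vnorm_sqr mxE raddf_sum; apply: eq_bigr => k _.
by rewrite adjmxE !mxE.
Qed.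

Lemma rip_self_gt0 n (A : 'M[C]_n) : A != 0 -> 0 < rip A A.
Proof.
case/matrix0Pn => i [j Aij_neq0].
have colj_neq0 : col j A != 0 by apply/matrix0Pn; exists i, 0; rewrite mxE.
rewrite rip_self (bigD1 j) //= ltr_pwDl ?exprn_gt0 ?vnorm_gt0 //.
by rewrite sumr_ge0 // => k _; rewrite sqr_ge0.
Qed.

Definition skewmx n : 'M[C]_n := tridiag n 1 0 (-1).

Lemma tridiag_skewE n (s d : R) :
  tridiag n s%:C d%:C (- s%:C) = s%:C *: skewmx n + d%:C *: 1%:M.
Proof.
apply/matrixP => i j; rewrite !mxE -val_eqE /=.
case: eqP => [h1|h1]; case: eqP => [h2|h2]; try lia; rewrite ?mulr1 ?mulr0 ?addr0 ?add0r //.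
case: eqP => [h3|h3]; rewrite ?mulr0 ?addr0 ?mulrN1 //.
Qed.

Lemma adjmx_skewmx n : adjmx (skewmx n) = - skewmx n.
Proof.
apply/matrixP => i j; rewrite adjmxE !mxE; move: (i : nat) (j : nat) => a b.
have [h1|h1] := eqVneq b a.+1; have [h2|h2] := eqVneq a b.+1; try lia;
have [h3|h3] := eqVneq b a; have [h4|h4] := eqVneq a b; try lia;
by rewrite ?rmorph0 ?rmorph1 ?rmorphN1 ?opprK ?oppr0.
Qed.

Lemma tridiag_scalarE n (d : R) : tridiag n 0%:C d%:C (- 0%:C) = d%:C *: 1%:M.
Proof. by rewrite tridiag_skewE rmorph0 scale0r add0r. Qed.

Lemma skewmx_in_AT n : in_AT (skewmx n).
Proof. by exists 1, 0; rewrite rmorph1 rmorph0. Qed.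

Lemma scalar_in_AT n (d : R) : in_AT (d%:C *: 1%:M : 'M[C]_n).
Proof. by exists 0, d; rewrite tridiag_scalarE. Qed.

Lemma skewmx_neq0 n : (1 < n)%N -> skewmx n != 0.
Proof.
case: n => [|[|m]] // _; apply/matrix0Pn.
by exists (Ordinal (isT : (1 < m.+2)%N)), ord0; rewrite mxE /= oner_neq0.
Qed.

Lemma is_proj_AT_hermitian n (W P : 'M[C]_n) : (1 < n)%N -> adjmx W = W ->
  is_proj_AT W P <-> P = (complex.Re (\tr W) / n%:R)%:C *: 1%:M.
Proof.
move=> n_gt1 hermW.
have skew_herm := rip_skew_herm (adjmx_skewmx n).
have orth_skew s d : rip (skewmx n) (W - tridiag n s%:C d%:C (- s%:C))
    = - (s * rip (skewmx n) (skewmx n)).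
  rewrite ripDr ripNr tridiag_skewE ripDr !ripZr (skew_herm _ hermW).
  by rewrite (skew_herm _ (adjmx1 n)) mulr0 addr0 sub0r.
have orth_id s d : rip 1%:M (W - tridiag n s%:C d%:C (- s%:C))
    = complex.Re (\tr W) - d * n%:R.
  rewrite ripDr ripNr tridiag_skewE ripDr !ripZr [rip 1%:M (skewmx n)]rip_sym.
  by rewrite (skew_herm _ (adjmx1 n)) !rip1l mxtrace1 Re_nat mulr0 add0r.
have n_neq0 : (n%:R : R) != 0 by rewrite pnatr_eq0 -lt0n ltnW.
split.
- case=> [[s [d ->]] orthP].
  have /eqP := orthP _ (skewmx_in_AT n).
  rewrite orth_skew oppr_eq0 mulf_eq0 (gt_eqF (rip_self_gt0 (skewmx_neq0 n_gt1))) orbF.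
  move=> /eqP ->; rewrite tridiag_scalarE.
  have /eqP := orthP _ (scalar_in_AT n 1); rewrite rmorph1 scale1r orth_id subr_eq0.
  by move=> /eqP ->; rewrite mulfK.
- move=> ->; split; first exact: scalar_in_AT.
  move=> _ [s [d ->]]; rewrite -tridiag_scalarE rip_sym (tridiag_skewE n s d) ripDr !ripZr.
  rewrite [rip _ (skewmx n)]rip_sym [rip _ 1%:M]rip_sym orth_skew orth_id.
  by rewrite mul0r oppr0 mulfVK // subrr !mulr0 addr0.
Qed.

Lemma adjmx_Wmx_self n (x : 'cV[C]_n) : adjmx (Wmx x x) = Wmx x x.
Proof. by rewrite /Wmx adjmxM adjmxK. Qed.

Lemma Re_tr_Wmx_self n (x : 'cV[C]_n) : x != 0 -> complex.Re (\tr (Wmx x x)) = 1.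
Proof. by move=> x_neq0; rewrite mxtrace_mul_adj hdot_self vnorm_normalize // expr1n. Qed.

Lemma kappa_self n (x : 'cV[C]_n) : x != 0 -> kappa x x = 1.
Proof.
move=> /vnorm_gt0 x_gt0.
by rewrite /kappa hdot_self normc_real ger0_norm ?sqr_ge0 // -expr2 divff // gt_eqF ?exprn_gt0.
Qed.

Lemma frob_scalar n (c : R) : frob (c%:C *: 1%:M : 'M[C]_n) = Num.sqrt (c ^+ 2 * n%:R).
Proof. by rewrite /frob ripZr rip_sym ripZr rip1l mxtrace1 Re_nat mulrA -expr2. Qed.

Lemma skew_ratio (s : R) : s != 0 -> s%:C / - s%:C = -1.
Proof. by move=> s_neq0; rewrite invrN mulrN divff // fmorph_eq0. Qed.

Lemma leigvec_skew n (s : R) h :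
  s != 0 -> leigvec n s%:C (- s%:C) h = reigvec n s%:C (- s%:C) h.
Proof.
move=> s_neq0; rewrite /leigvec /reigvec.
have conjN : Num.conj (- s%:C) = - s%:C :> C by rewrite -rmorphN conj_realc.
suff -> : Num.conj (- s%:C) / Num.conj s%:C = s%:C / - s%:C :> C by [].
by rewrite conjN conj_realc skew_ratio // mulNr divff // fmorph_eq0.
Qed.

Lemma reigvec_neq0 n (sigma tau : C) h :
  sigma / tau != 0 -> (0 < h <= n)%N -> reigvec n sigma tau h != 0.
Proof.
move=> ratio_neq0 /andP[h_gt0 h_le_n].
have n_gt0 : (0 < n)%N by apply: leq_trans h_le_n.
apply/matrix0Pn; exists (Ordinal n_gt0), 0; rewrite mxE.
rewrite mulf_neq0 ?expf_neq0 ?sqrtc_eq0 // fmorph_eq0 gt_eqF // sin_gt0_pi //.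
rewrite /= mulr1n mulr1 divr_gt0 ?mulr_gt0 ?ltr0n ?pi_gt0 //=.
by rewrite ltr_pdivrMr ?ltr0n // mulrC ltr_pM2l ?pi_gt0 // ltr_nat ltnS.
Qed.

End SkewToeplitzCondition.

Theorem proposition15 (R : realType) (n : nat) (sigma delta : R) (h : nat) :
  (2 <= n)%N -> sigma != 0 -> (1 <= h <= n)%N ->
  let x := reigvec n sigma%:C (- sigma%:C) h in
  let y := leigvec n sigma%:C (- sigma%:C) h in
  let W := Wmx x y in
  (exists P, is_proj_AT W P) /\
  (forall P, is_proj_AT W P -> kappa x y * frob P = (Num.sqrt (n%:R : R))^-1).
Proof.
move=> n_gt1 sigma_neq0 h_range x y W.
have y_eq_x : y = x by exact: leigvec_skew.
have x_neq0 : x != 0.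
  by apply: reigvec_neq0 h_range; rewrite skew_ratio // oppr_eq0 oner_eq0.
have hermW : adjmx W = W by rewrite /W y_eq_x adjmx_Wmx_self.
have trW : complex.Re (\tr W) = 1 by rewrite /W y_eq_x Re_tr_Wmx_self.
have projW := is_proj_AT_hermitian _ n_gt1 hermW.
split=> [|P /projW ->]; first by eexists; apply/projW.
have n_neq0 : (n%:R : R) != 0 by rewrite pnatr_eq0 -lt0n ltnW.
rewrite y_eq_x kappa_self // mul1r frob_scalar trW mul1r expr2 -mulrA mulVf // mulr1.
by rewrite sqrtrV ?ler0n.
Qed.
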